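(* Let $\rho$ be a representation of $32_{65}$ over a set $U$. Then the graph on $U$ whose edges are the pairs $\{x,y\}$ with $(x,y)\in\rho(a)$ contains a clique of size $6$.
   Context: $32_{65}$ is the finite integral symmetric relation algebra with atoms $1'$, $a$, $b$, $c$, all symmetric, in which a diversity cycle $xyz$ (with $x,y,z\in\{a,b,c\}$) is mandatory (i.e. $x;y\ge z$) if it involves $a$ and forbidden (i.e. $x;y\cdot z=0$) otherwise. A representation over a set $U$ is an embedding $\rho$ into the full relation algebra $\langle\mathcal P(U\times U),\cup,{}^c,\circ,{}^{-1},\mathrm{Id}_U\rangle$. *)

From HB Require Import structures.
From mathcomp Require Import all_boot.
Set Implicit Arguments. Unset Strict Implicit. Unset Printing Implicit Defensive.

(** Atoms of the relation algebra 32_65: the identity 1' and the diversity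
    atoms a, b, c (all symmetric). *)
Inductive atom := One | Aa | Ab | Ac.

Definition atom_to_ord (x : atom) : 'I_4 :=
  match x with One => inord 0 | Aa => inord 1 | Ab => inord 2 | Ac => inord 3 end.
Definition ord_to_atom (i : 'I_4) : atom :=
  match val i with 0 => One | 1 => Aa | 2 => Ab | _ => Ac end.
Lemma atom_to_ordK : cancel atom_to_ord ord_to_atom.
Proof. by case; rewrite /ord_to_atom /= inordK. Qed.

HB.instance Definition _ := Equality.copy atom (can_type atom_to_ordK).
HB.instance Definition _ := Choice.copy atom (can_type atom_to_ordK).
HB.instance Definition _ := Countable.copy atom (can_type atom_to_ordK).
HB.instance Definition _ := Finite.copy atom (can_type atom_to_ordK).

Definition RA := {set atom}.

Definition is_div (x : atom) : bool := x != One.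

(** Atom-level cycle table: [z <= x ; y].
    1' is the identity; for diversity atoms, 1' <= x;y iff y = x (converse = x,
    all atoms symmetric); a diversity cycle xyz is allowed (mandatory) iff it
    involves a, forbidden otherwise. *)
Definition atom_le_comp (x y z : atom) : bool :=
  if x == One then y == z
  else if y == One then x == z
  else if z == One then x == y
  else [|| x == Aa, y == Aa | z == Aa].

Definition ra_comp (X Y : RA) : RA :=
  [set z | [exists x in X, exists y in Y, atom_le_comp x y z]].
Definition ra_conv (X : RA) : RA := X. (* all atoms symmetric *)
Definition ra_id : RA := [set One].

(** A representation of 32_65 over a set (type) U: an embedding (injective
    homomorphism of relation algebras) into the full relation algebra on U,
    relations being represented as binary predicates on U. *)
Record representation (U : Type) (rho : RA -> U -> U -> Prop) : Prop := {
  rep_join : forall X Y u v, rho (X :|: Y) u v <-> (rho X u v \/ rho Y u v);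
  rep_compl : forall X u v, rho (~: X) u v <-> ~ rho X u v;
  rep_comp : forall X Y u v,
    rho (ra_comp X Y) u v <-> exists w, rho X u w /\ rho Y w v;
  rep_conv : forall X u v, rho (ra_conv X) u v <-> rho X v u;
  rep_id : forall u v, rho ra_id u v <-> u = v;
  rep_inj : forall X Y, (forall u v, rho X u v <-> rho Y u v) -> X = Y }.

Definition has_clique (U : Type) (E : U -> U -> Prop) (k : nat) : Prop :=
  exists f : 'I_k -> U, injective f /\ (forall i j, i != j -> E (f i) (f j)).

(** Among the diversity atoms, [b] and [c] compose only into [1'] and [a]:
    [b;b = c;c = 1' + a] and [b;c = a], because every cycle avoiding [a] is
    forbidden.  Hence any two distinct points that are [b]- or [c]-neighbours
    of a common point [u] are joined by an [a]-edge, and it suffices to find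
    three [b]-neighbours and three [c]-neighbours of one point.  Starting
    from an [a]-edge [u v], the mandatory cycles [abb] and [abc] give two
    [b]-neighbours [y1], [y2] of [u] (told apart by their atoms to [v]); they
    are [a]-joined, so there is [s] with [y1 c s c y2], then [u a s], and a
    third [b]-neighbour [y3] of [u] with [y3 b s], which differs from [y1]
    and [y2] because these are [c]-neighbours of [s].  The same argument with
    [b] and [c] exchanged gives the [c]-neighbours. *)
From mathcomp Require Import all_boot.
From Stdlib Require Import Classical.
Set Implicit Arguments. Unset Strict Implicit. Unset Printing Implicit Defensive.

Definition ord_cat (T : Type) (m n : nat) (f : 'I_m -> T) (g : 'I_n -> T)
  (i : 'I_(m + n)) : T :=
  match split i with inl j => f j | inr j => g j end.

Lemma ord_cat_inj (T : Type) (m n : nat) (f : 'I_m -> T) (g : 'I_n -> T) :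
  injective f -> injective g -> (forall i j, f i <> g j) -> injective (ord_cat f g).
Proof.
move=> f_inj g_inj fg i1 i2; rewrite /ord_cat => e; apply: (can_inj splitK).
move: e; case: (split i1) (split i2) => j1 [] j2 //.
- by move/f_inj->.
- by move/fg.
- by move/esym/fg.
- by move/g_inj->.
Qed.

Lemma nth3_inj (T : Type) (x y z : T) : x <> y -> x <> z -> y <> z ->
  injective (fun i : 'I_3 => nth x [:: x; y; z] i).
Proof.
move=> nxy nxz nyz [[|[|[|//]]] ?] [[|[|[|//]]] ?] //= e; have e' := esym e;
by [apply: val_inj | case: nxy | case: nxz | case: nyz].
Qed.

(* [==] on [atom] is transported from ['I_4] through [inord], so it does not
   reduce on closed atoms; [eq_atomE] replaces it by a computable test. *)
Definition atom_beq (x y : atom) : bool :=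
  match x, y with
  | One, One | Aa, Aa | Ab, Ab | Ac, Ac => true
  | _, _ => false
  end.

Lemma eq_atomE (x y : atom) : (x == y) = atom_beq x y.
Proof. by case: x; case: y; rewrite ?eqxx //=; apply/negbTE/eqP. Qed.

Definition bc_atoms : {set atom} := [set Ab; Ac].

Lemma ra_comp1 (p q z : atom) :
  (z \in ra_comp [set p] [set q]) = atom_le_comp p q z.
Proof.
rewrite inE; apply/existsP/idP => [|pqz].
  by case=> x /andP[/set1P-> /existsP[y /andP[/set1P->]]].
by exists p; rewrite set11; apply/existsP; exists q; rewrite set11.
Qed.

Lemma ra_comp_bc_sub (p q : atom) : p \in bc_atoms -> q \in bc_atoms ->
  ra_comp [set p] [set q] \subset [set One; Aa].
Proof.
move=> bp bq; apply/subsetP => z; rewrite ra_comp1 !inE /atom_le_comp.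
by move: bp bq; rewrite !inE !eq_atomE; case: p; case: q; case: z.
Qed.

Lemma ra_comp_bc_supA (p q : atom) : p \in bc_atoms -> q \in bc_atoms ->
  [set Aa] \subset ra_comp [set p] [set q].
Proof.
move=> bp bq; rewrite sub1set ra_comp1 /atom_le_comp.
by move: bp bq; rewrite !inE !eq_atomE; case: p; case: q.
Qed.

Section Representation.
Variables (U : Type) (rho : RA -> U -> U -> Prop).
Hypothesis rep : representation rho.
Local Notation R p := (rho [set p]).

Lemma rep_mono (X Y : RA) (u v : U) : X \subset Y -> rho X u v -> rho Y u v.
Proof. by move=> /setUidPr <- Xuv; apply/(rep_join rep); left. Qed.

Lemma rep_atom_sym (p : atom) (u v : U) : R p u v -> R p v u.
Proof. exact: (rep_conv rep [set p] v u).2. Qed.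

Lemma rep_atom_disj (p q : atom) (u v : U) : p != q -> R p u v -> ~ R q u v.
Proof.
move=> npq puv; apply/(rep_compl rep); apply: rep_mono puv.
by rewrite sub1set !inE.
Qed.

Lemma rep_atom_neq (p q : atom) (u x y : U) :
  p != q -> R p u x -> R q u y -> x <> y.
Proof. by move=> npq pux quy exy; subst y; exact: rep_atom_disj npq pux quy. Qed.

Lemma rep_Aa_split (p q : atom) (u v : U) : p \in bc_atoms -> q \in bc_atoms ->
  R Aa u v -> exists w, R p u w /\ R q w v.
Proof. by move=> bp bq /(rep_mono (ra_comp_bc_supA bp bq))/(rep_comp rep). Qed.

Lemma rep_bc_path_Aa (p q : atom) (x u y : U) : p \in bc_atoms -> q \in bc_atoms ->
  R p x u -> R q u y -> x <> y -> R Aa x y.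
Proof.
move=> bp bq pxu quy nxy.
have : rho (ra_comp [set p] [set q]) x y by apply/(rep_comp rep); exists u.
move/(rep_mono (ra_comp_bc_sub bp bq))/(rep_join rep).
by case=> // /(rep_id rep).
Qed.

Lemma exists_Aa_edge : exists u v, R Aa u v.
Proof.
apply: NNPP => noA.
have no0 u v : ~ rho set0 u v.
  move=> h; apply: (@rep_atom_disj One Aa u v);
  by [rewrite eq_atomE | apply: rep_mono h; apply: sub0set].
have A0 : [set Aa] = set0.
  apply: (rep_inj rep) => u v; split => h; last by case: (no0 _ _ h).
  by case: noA; exists u, v.
by move: (set11 Aa); rewrite A0 inE.
Qed.

Lemma three_atom_neighbours (p q : atom) (u v : U) :
  p \in bc_atoms -> q \in bc_atoms -> p != q -> R Aa u v ->
  exists f : 'I_3 -> U, injective f /\ forall i, R p u (f i).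
Proof.
move=> bp bq npq Auv.
have [y1 [puy1 py1v]] := rep_Aa_split bp bp Auv.
have [y2 [puy2 qy2v]] := rep_Aa_split bp bq Auv.
have ny12 : y1 <> y2.
  exact: (rep_atom_neq npq (rep_atom_sym py1v) (rep_atom_sym qy2v)).
have [s [qy1s qsy2]] :=
  rep_Aa_split bq bq (rep_bc_path_Aa bp bp (rep_atom_sym puy1) puy2 ny12).
have Aus : R Aa u s.
  apply: (rep_bc_path_Aa bp bq puy1 qy1s) => eus; subst s.
  exact: rep_atom_disj npq (rep_atom_sym puy1) qy1s.
have [y3 [puy3 py3s]] := rep_Aa_split bp bp Aus.
exists (fun i : 'I_3 => nth y1 [:: y1; y2; y3] i); split.
  apply: nth3_inj => // /esym.
  - exact: (rep_atom_neq npq (rep_atom_sym py3s) (rep_atom_sym qy1s)).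
  - exact: (rep_atom_neq npq (rep_atom_sym py3s) qsy2).
by case=> [[|[|[|//]]] ?].
Qed.

Lemma bc_neighbours_clique (u : U) (k : nat) (f : 'I_k -> U) : injective f ->
  (forall i, exists2 p, p \in bc_atoms & R p u (f i)) -> has_clique (R Aa) k.
Proof.
move=> f_inj bcf; exists f; split=> // i j nij.
have [p bp puf] := bcf i; have [q bq quf] := bcf j.
apply: (rep_bc_path_Aa bp bq (rep_atom_sym puf) quf).
by move/f_inj/eqP; apply/negP.
Qed.

End Representation.

Theorem mainTheorem11 (U : Type) (rho : RA -> U -> U -> Prop) :
  representation rho -> has_clique (rho [set Aa]) 6.
Proof.
move=> rep.
have bAb : Ab \in bc_atoms by rewrite !inE eqxx.
have bAc : Ac \in bc_atoms by rewrite !inE eqxx orbT.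
have nbc : Ab != Ac by rewrite eq_atomE.
have ncb : Ac != Ab by rewrite eq_atomE.
have [u [v Auv]] := exists_Aa_edge rep.
have [f [f_inj buf]] := three_atom_neighbours rep bAb bAc nbc Auv.
have [g [g_inj cug]] := three_atom_neighbours rep bAc bAb ncb Auv.
apply: (bc_neighbours_clique rep (f := ord_cat f g)).
- by apply: ord_cat_inj => // i j; apply: (rep_atom_neq rep nbc (buf i) (cug j)).
- by move=> i; rewrite /ord_cat; case: split => j; [exists Ab | exists Ac].
Qed.
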